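(* Let $n\ge2$ and $D_0>0$, and assume $\alpha>(n-1)\beta>0$. Let $p^a\in\mathbb{R}^n_{\ge0}$. Define the $n\times n$ matrix $A_n=(\alpha+\beta)I_n-\beta J_n$ (diagonal entries $\alpha$, off-diagonal entries $-\beta$), and let $E_n$ be the all-ones vector in $\mathbb{R}^n$. Consider the ex ante regulation game restricted to profiles with strictly positive demands. Among such profiles, a pure-strategy Nash equilibrium exists if and only if every entry of the vector $$(A_n+2\alpha I_n)^{-1}\,[D_0E_n+A_np^a]$$ is strictly positive. When this holds: - for every choice of the payment vector $p^d\in\mathbb{R}^n$ there is exactly one such equilibrium, so the equilibrium is unique up to a free choice of $p^d$; - there are constants $g_i,h_i$, depending only on $p^a,D_0,\alpha,\beta$, such that at equilibrium $p^s_i=g_i-p^d_i$ and $p^c_i=h_i+p^d_i$ for each $i$; - the net internaut price $p^s_i+p^c_i=g_i+h_i$ for each CP $i$ is unique and independent of $p^d$; - the equilibrium demand vector is unique and does not depend on $p^d$; - the revenues per unit demand, and hence the total revenues of the ISP and of every CP, do not depend on $p^d$.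
   Context: Setting: one ISP and $n$ content providers CP $1,\dots,n$. - $p^s=(p^s_1,\dots,p^s_n)$ are the ISP's prices per unit demand to internauts of CP $i$; $p^s$ is chosen by the ISP. - $p^c_i$ is CP $i$'s price per unit demand to its internauts, chosen by CP $i$. - $p^d_i$ is the payment per unit demand from CP $i$ to the ISP. - $p^a_i\ge0$ is CP $i$'s advertising revenue per unit demand. On the set of profiles where all demands are strictly positive, the demand for CP $i$'s content is $$d_i=D_0-\alpha(p^s_i+p^c_i)+\beta\sum_{j\ne i}(p^s_j+p^c_j).$$ Payoffs are $U_{ISP}=\sum_i d_i(p^s_i+p^d_i)$ and $U_{CP,i}=d_i(p^c_i+p^a_i-p^d_i)$. Ex ante regulation game: 1. A regulator first sets the vector $p^d$. 2. Then the ISP chooses $p^s$ and each CP $i$ chooses $p^c_i$, all simultaneously. 3. Internauts generate the demands. Strategies are jointly constrained so that all $d_i>0$. An equilibrium is a profile in this set from which no player can profitably deviate unilaterally while remaining in the set. The regulator chooses each $p^d_i$ to maximize $\big(d_i(p^s_i+p^d_i)\big)^{\gamma_i}\big(d_i(p^c_i+p^a_i-p^d_i)\big)^{1-\gamma_i}$ at the induced equilibrium, with weights $\gamma_i\in(0,1)$. *)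

From HB Require Import structures.
From mathcomp Require Import all_boot all_order all_algebra.
From mathcomp Require Import reals.
Set Implicit Arguments. Unset Strict Implicit. Unset Printing Implicit Defensive.
Import Order.TTheory GRing.Theory Num.Theory.
Local Open Scope ring_scope.

Section Game.
Variables (R : realType) (n : nat).

Definition demand (D0 alpha beta : R) (ps pc : 'I_n -> R) (i : 'I_n) : R :=
  D0 - alpha * (ps i + pc i) + beta * \sum_(j < n | j != i) (ps j + pc j).

Definition U_ISP (D0 alpha beta : R) (pd ps pc : 'I_n -> R) : R :=
  \sum_(i < n) demand D0 alpha beta ps pc i * (ps i + pd i).

Definition U_CP (D0 alpha beta : R) (pa pd ps pc : 'I_n -> R) (i : 'I_n) : R :=
  demand D0 alpha beta ps pc i * (pc i + pa i - pd i).

Definition feasible (D0 alpha beta : R) (ps pc : 'I_n -> R) : Prop :=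
  forall i, 0 < demand D0 alpha beta ps pc i.

Definition upd (pc : 'I_n -> R) (i : 'I_n) (c : R) : 'I_n -> R :=
  fun j => if j == i then c else pc j.

(* Nash equilibrium of stage 2 (given pd) within the feasible set *)
Definition is_equilibrium (D0 alpha beta : R) (pa pd ps pc : 'I_n -> R) : Prop :=
  [/\ feasible D0 alpha beta ps pc,
      (forall ps', feasible D0 alpha beta ps' pc ->
         U_ISP D0 alpha beta pd ps' pc <= U_ISP D0 alpha beta pd ps pc) &
      (forall (i : 'I_n) (c : R), feasible D0 alpha beta ps (upd pc i c) ->
         U_CP D0 alpha beta pa pd ps (upd pc i c) i <= U_CP D0 alpha beta pa pd ps pc i)].

Definition A_mx (alpha beta : R) : 'M[R]_n :=
  (alpha + beta)%:M - beta *: const_mx 1.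

Definition E_vec : 'cV[R]_n := const_mx 1.

Definition eq_vec (D0 alpha beta : R) (pa : 'I_n -> R) : 'cV[R]_n :=
  invmx (A_mx alpha beta + (2 * alpha)%:M) *m
    (D0 *: E_vec + A_mx alpha beta *m \col_i pa i).

Definition eq_condition (D0 alpha beta : R) (pa : 'I_n -> R) : Prop :=
  forall i : 'I_n, 0 < eq_vec D0 alpha beta pa i ord0.

End Game.

From Pilot Require Import Defs.
From HB Require Import structures.
From mathcomp Require Import all_boot all_order all_algebra.
From mathcomp Require Import reals.
From mathcomp Require Import ring lra.
Import Order.TTheory GRing.Theory Num.Theory.
Local Open Scope ring_scope.

(* Demand depends on prices only through x = ps + pc, as d = D0 E - (a I - b J) x with
   a = alpha + beta and b = beta. Both payoffs are concave quadratics on the open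
   feasible set (for the ISP because (sum v)^2 <= n sum v^2), so the equilibria are
   exactly the feasible profiles satisfying the first-order conditions. Written in the
   margins r = ps + pd and m = pc + pa - pd, these read d = alpha m and d = (a I - b J) r;
   substituting x = r + m - pa gives (A_n + 2 alpha I) m = D0 E + A_n pa. Hence m, r and
   d are determined independently of pd, and feasibility amounts to m > 0. *)

Section RealLemmas.
Set Implicit Arguments. Unset Strict Implicit.
Variables (R : realFieldType) (n : nat).

Lemma sqr_sum_le (v : 'I_n -> R) : (\sum_k v k) ^+ 2 <= n%:R * \sum_k v k ^+ 2.
Proof.
set T := \sum_k v k ^+ 2; set V := \sum_k v k.
have inner i : \sum_j (v i - v j) ^+ 2 = v i ^+ 2 *+ n + T - 2 * v i * V.
  rewrite (eq_bigr (fun j => v i ^+ 2 + v j ^+ 2 - 2 * v i * v j)) => [|j _]; last by ring.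
  by rewrite sumrB big_split /= sumr_const card_ord -mulr_sumr.
have : 0 <= \sum_i \sum_j (v i - v j) ^+ 2.
  by apply: sumr_ge0 => i _; apply: sumr_ge0 => j _; apply: sqr_ge0.
under eq_bigr do rewrite inner.
rewrite sumrB big_split /= sumrMnl sumr_const card_ord -mulr_suml -mulr_sumr -/T -/V.
rewrite -[T *+ n]mulr_natr; lra.
Qed.

Lemma exists_small_step (a b : 'I_n -> R) (K : R) :
  (forall j, 0 < a j) -> exists e, [/\ 0 < e, e * K < 1 & forall j, e * b j < a j].
Proof.
move=> a_gt0.
set S := \sum_j `|b j| / a j.
have S_ge0 : 0 <= S by apply: sumr_ge0 => j _; rewrite divr_ge0 // ltW.
set D := 1 + `|K| + S.
have K_le := ler_norm K; have K_ge0 := normr_ge0 K.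
have D_gt0 : 0 < D by rewrite /D; lra.
exists D^-1; split; first by rewrite invr_gt0.
- by rewrite ltr_pdivrMl // mulr1 /D; lra.
- move=> j; have aj := a_gt0 j.
  have hj : `|b j| / a j <= S.
    by rewrite /S (bigD1 j) //= lerDl sumr_ge0 // => k _; rewrite divr_ge0 // ltW.
  rewrite (le_lt_trans (ler_wpM2l _ (ler_norm (b j)))) ?invr_ge0 ?ltW //.
  by rewrite ltr_pdivrMl // -(ltr_pdivrMr _ _ aj) /D; lra.
Qed.

(* A step of size e with linear gain e c and quadratic loss at most e^2 K c
   is profitable unless c = 0. *)
Lemma quad_step_eq0 (c K e : R) :
  0 < e -> e * K < 1 -> 0 <= c -> e * c - e ^+ 2 * (K * c) <= 0 -> c = 0.
Proof.
move=> e_gt0 eK c_ge0 step; apply/eqP; rewrite eq_le c_ge0 andbT.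
have : e * c * (1 - e * K) <= 0.
  by rewrite (_ : e * c * (1 - e * K) = e * c - e ^+ 2 * (K * c)) //; ring.
by rewrite pmulr_lle0 ?subr_gt0 // pmulr_rle0.
Qed.

End RealLemmas.

Section ScalarMinusAllOnes.
Set Implicit Arguments. Unset Strict Implicit.
Variables (R : realFieldType) (n : nat).
Implicit Types (a b c : R) (u v d q : 'I_n -> R).

(* The vector (a I_n - b J_n) v; both A_n and the demand map are of this form. *)
Definition IJ a b v (i : 'I_n) : R := a * v i - b * \sum_k v k.

(* Inverse of a I_n - b J_n, defined when a != 0 and a - n b != 0. *)
Definition IJinv a b d (i : 'I_n) : R := (d i + b * (\sum_k d k) / (a - n%:R * b)) / a.

Lemma IJ_eq a b u v : u =1 v -> IJ a b u =1 IJ a b v.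
Proof. by move=> e i; rewrite /IJ (eq_bigr _ (fun j _ => e j)) e. Qed.

Lemma IJD a b u v i : IJ a b (fun j => u j + v j) i = IJ a b u i + IJ a b v i.
Proof. by rewrite /IJ big_split /=; ring. Qed.

Lemma IJZ a b c v i : IJ a b (fun j => c * v j) i = c * IJ a b v i.
Proof. by rewrite /IJ -mulr_sumr; ring. Qed.

Lemma IJ_delta a b c i : IJ a b (fun j => if j == i then c else 0) i = (a - b) * c.
Proof. by rewrite /IJ eqxx -big_mkcond big_pred1_eq; ring. Qed.

Lemma sum_IJ a b v : \sum_i IJ a b v i = (a - n%:R * b) * \sum_i v i.
Proof. by rewrite sumrB -mulr_sumr sumr_const card_ord -mulr_natl; ring. Qed.

Lemma sum_mul_IJ a b u v :
  \sum_i u i * IJ a b v i = a * \sum_i u i * v i - b * (\sum_i u i) * \sum_i v i.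
Proof.
rewrite (eq_bigr (fun i => a * (u i * v i) - (b * \sum_k v k) * u i)) => [|i _]; last first.
  by rewrite /IJ; ring.
by rewrite sumrB -!mulr_sumr; ring.
Qed.

Lemma IJ_sym a b u v : \sum_i u i * IJ a b v i = \sum_i v i * IJ a b u i.
Proof. by rewrite !sum_mul_IJ (eq_bigr _ (fun i _ => mulrC (u i) (v i))); ring. Qed.

Lemma IJ_quad_le a b v : 0 <= b -> \sum_i v i * IJ a b v i <= a * \sum_i v i ^+ 2.
Proof.
move=> b_ge0; rewrite sum_mul_IJ (eq_bigr _ (fun i _ => esym (expr2 (v i)))) -mulrA -expr2.
by rewrite lerBlDr lerDl mulr_ge0 // sqr_ge0.
Qed.

Lemma IJ_quad_ge0 a b v :
  0 <= b -> 0 <= a - n%:R * b -> 0 <= \sum_i v i * IJ a b v i.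
Proof.
move=> b_ge0 gap_ge0.
rewrite sum_mul_IJ (eq_bigr _ (fun i _ => esym (expr2 (v i)))) -mulrA -expr2.
have := ler_wpM2l b_ge0 (sqr_sum_le v).
have : 0 <= (a - n%:R * b) * \sum_i v i ^+ 2 by rewrite mulr_ge0 // sumr_ge0 // => i _; apply: sqr_ge0.
lra.
Qed.

Section Invertible.
Variables (a b : R).
Hypotheses (a_neq0 : a != 0) (gap_neq0 : a - n%:R * b != 0).

Lemma IJinvK d : IJ a b (IJinv a b d) =1 d.
Proof.
move=> i; set S := \sum_k d k; set c := b * S / (a - n%:R * b).
have sumE : \sum_k IJinv a b d k = (S + c *+ n) / a.
  by rewrite /IJinv -mulr_suml big_split /= sumr_const card_ord.
rewrite /IJ sumE -[c *+ n]mulr_natl /c /IJinv -/S.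
by field; rewrite a_neq0 gap_neq0.
Qed.

Lemma IJ_inj q d : (forall i, IJ a b q i = d i) -> q =1 IJinv a b d.
Proof.
move=> qd i.
have sumd : \sum_k d k = (a - n%:R * b) * \sum_k q k.
  by rewrite -sum_IJ; apply: eq_bigr => k _; rewrite qd.
by rewrite /IJinv sumd -qd /IJ; field; rewrite a_neq0 gap_neq0.
Qed.

Lemma mulmx_IJ p (B : 'M[R]_(n, p)) i j :
  ((a%:M - b *: const_mx 1 : 'M[R]_n) *m B) i j = IJ a b (fun k => B k j) i.
Proof.
rewrite mulmxBl mul_scalar_mx -scalemxAl !mxE /IJ.
by under eq_bigr do rewrite mxE mul1r.
Qed.

Lemma IJ_unitmx : (a%:M - b *: const_mx 1 : 'M[R]_n) \in unitmx.
Proof.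
pose N : 'M[R]_n := \matrix_(k, j) IJinv a b (fun l => (l == j)%:R) k.
suff /mulmx1_unit[] : (a%:M - b *: const_mx 1) *m N = 1%:M by [].
apply/matrixP => i j; rewrite mulmx_IJ (IJ_eq _ _ (fun k => mxE _ _ k j)) IJinvK.
by rewrite !mxE.
Qed.

End Invertible.
End ScalarMinusAllOnes.

Section FirstOrderConditions.
Set Implicit Arguments. Unset Strict Implicit.
Variables (R : realType) (n : nat) (D0 alpha beta : R) (pa pd : 'I_n -> R).
Implicit Types (ps pc v : 'I_n -> R).

Local Notation IJd := (IJ (alpha + beta) beta).
Local Notation demand := (demand D0 alpha beta).
Local Notation feasible := (feasible D0 alpha beta).
Local Notation is_equilibrium := (is_equilibrium D0 alpha beta pa pd).

Definition isp_grad ps pc k := demand ps pc k - IJd (fun j => ps j + pd j) k.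

Definition cp_grad ps pc i := demand ps pc i - alpha * (pc i + pa i - pd i).

Lemma demandE ps pc i : demand ps pc i = D0 - IJd (fun j => ps j + pc j) i.
Proof. by rewrite /Defs.demand /IJ [in RHS](bigD1 i) //=; ring. Qed.

Lemma demand_shift ps pc ps' pc' v :
  (forall j, ps' j + pc' j = ps j + pc j + v j) ->
  forall i, demand ps' pc' i = demand ps pc i - IJd v i.
Proof. by move=> shift i; rewrite !demandE (IJ_eq _ _ shift) IJD; ring. Qed.

Lemma demand_margins ps pc i :
  demand ps pc i = D0 - IJd (fun j => ps j + pd j) i
                      - IJd (fun j => pc j + pa j - pd j) i + IJd pa i.
Proof.
rewrite demandE /IJ.
have -> : \sum_j (ps j + pc j) =
    \sum_j (ps j + pd j) + \sum_j (pc j + pa j - pd j) - \sum_j pa j.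
  by rewrite -big_split /= -sumrB; apply: eq_bigr => j _; ring.
ring.
Qed.

Lemma feasible_perturb ps pc v (K : R) : feasible ps pc ->
  exists e, [/\ 0 < e, e * K < 1 & forall ps' pc',
    (forall j, ps' j + pc' j = ps j + pc j + e * v j) -> feasible ps' pc'].
Proof.
move=> feas; have [e [e_gt0 eK step]] := exists_small_step (IJd v) K feas.
exists e; split=> // ps' pc' shift j.
by rewrite (demand_shift shift) IJZ; have := step j; lra.
Qed.

Lemma U_ISP_shift ps pc ps' v : (forall j, ps' j = ps j + v j) ->
  U_ISP D0 alpha beta pd ps' pc = U_ISP D0 alpha beta pd ps pc
    + \sum_k v k * isp_grad ps pc k - \sum_k v k * IJd v k.
Proof.
move=> shift; have shift_sum j : ps' j + pc j = ps j + pc j + v j by rewrite shift; ring.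
rewrite /U_ISP /isp_grad.
under eq_bigr do rewrite (demand_shift shift_sum) shift.
set q := fun j => ps j + pd j.
transitivity (\sum_i (demand ps pc i * q i + v i * (demand ps pc i - IJd q i)
                      - v i * IJd v i) + (\sum_i v i * IJd q i - \sum_i q i * IJd v i)).
  by rewrite -sumrB -big_split /=; apply: eq_bigr => i _; rewrite /q; ring.
by rewrite IJ_sym subrr addr0 big_split /= sumrN big_split.
Qed.

Lemma U_CP_shift ps pc i t :
  U_CP D0 alpha beta pa pd ps (upd pc i (pc i + t)) i =
  U_CP D0 alpha beta pa pd ps pc i + t * cp_grad ps pc i - alpha * t ^+ 2.
Proof.
have shift j : ps j + upd pc i (pc i + t) j = ps j + pc j + (if j == i then t else 0).
  by rewrite /upd; case: eqP => [->|_]; ring.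
by rewrite /U_CP /cp_grad (demand_shift shift) IJ_delta /upd eqxx; ring.
Qed.

Lemma isp_grad_eq0 ps pc : 0 <= beta -> is_equilibrium ps pc ->
  forall k, isp_grad ps pc k = 0.
Proof.
move=> b_ge0 [feas isp_best _]; set G := isp_grad ps pc.
have [e [e_gt0 eK perturb]] := feasible_perturb G (alpha + beta) feas.
have feas' : feasible (fun j => ps j + e * G j) pc by apply: perturb => j; ring.
have := isp_best _ feas'; rewrite (@U_ISP_shift ps pc _ (fun j => e * G j)) //.
set S := \sum_k G k ^+ 2.
have lin : \sum_k e * G k * G k = e * S.
  by rewrite mulr_sumr; apply: eq_bigr => k _; ring.
have quad : \sum_k e * G k * IJd (fun j => e * G j) k <= e ^+ 2 * ((alpha + beta) * S).
  rewrite (eq_bigr (fun k => e ^+ 2 * (G k * IJd G k))) => [|k _]; last by rewrite IJZ; ring.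
  by rewrite -mulr_sumr ler_wpM2l ?sqr_ge0 // IJ_quad_le.
rewrite lin => step.
have S_eq0 : S = 0.
  by apply: (quad_step_eq0 e_gt0 eK); [apply: sumr_ge0 => k _; apply: sqr_ge0 | lra].
move=> k; apply/eqP; rewrite -sqrf_eq0; apply/eqP.
exact: (psumr_eq0P (fun i _ => sqr_ge0 (G i)) S_eq0).
Qed.

Lemma cp_grad_eq0 ps pc : is_equilibrium ps pc -> forall i, cp_grad ps pc i = 0.
Proof.
move=> [feas _ cp_best] i; set H := cp_grad ps pc i.
have [e [e_gt0 eK perturb]] := feasible_perturb (fun j => if j == i then H else 0) alpha feas.
have feas' : feasible ps (upd pc i (pc i + e * H)).
  by apply: perturb => j; rewrite /upd; case: eqP => [->|_]; rewrite ?eqxx; ring.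
have := cp_best i _ feas'; rewrite U_CP_shift -/H => step.
have : H ^+ 2 = 0.
  apply: (quad_step_eq0 e_gt0 eK (sqr_ge0 H)).
  by move: step; rewrite exprMn; lra.
by move/eqP; rewrite sqrf_eq0 => /eqP.
Qed.

Lemma equilibriumP ps pc :
  0 <= alpha -> 0 <= beta -> 0 <= alpha + beta - n%:R * beta ->
  is_equilibrium ps pc <->
  [/\ feasible ps pc, forall k, isp_grad ps pc k = 0 & forall i, cp_grad ps pc i = 0].
Proof.
move=> a_ge0 b_ge0 gap_ge0; split=> [eqm|[feas G0 H0]].
  by split; [case: eqm | exact: isp_grad_eq0 | exact: cp_grad_eq0].
split=> // [ps' _ | i c _].
  rewrite (@U_ISP_shift ps pc _ (fun j => ps' j - ps j)) => [|j]; last by ring.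
  under eq_bigr do rewrite G0 mulr0.
  by rewrite big1_eq addr0 lerBlDr lerDl IJ_quad_ge0.
rewrite (_ : c = pc i + (c - pc i)); last by ring.
rewrite U_CP_shift H0 mulr0 addr0 lerBlDr lerDl.
by rewrite mulr_ge0 ?sqr_ge0.
Qed.

End FirstOrderConditions.

Section Characterization.
Set Implicit Arguments. Unset Strict Implicit.
Variables (R : realType) (n : nat) (D0 alpha beta : R) (pa : 'I_n -> R).
Hypotheses (alpha_gt0 : 0 < alpha) (beta_ge0 : 0 <= beta)
  (gap_gt0 : 0 < alpha + beta - n%:R * beta).

Local Notation IJd := (IJ (alpha + beta) beta).

Lemma A_mx_addE (c : R) :
  A_mx n alpha beta + c%:M = (alpha + beta + c)%:M - beta *: const_mx 1.
Proof. by apply/matrixP => i j; rewrite !mxE; case: (i == j) => /=; ring. Qed.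

Lemma mulmx_IJ_col (a b : R) (v : 'I_n -> R) :
  (a%:M - b *: const_mx 1) *m \col_i v i = \col_i IJ a b v i.
Proof.
by apply/matrixP => i j; rewrite mulmx_IJ !mxE; apply: IJ_eq => k; rewrite mxE.
Qed.

Let ab_neq0 : alpha + beta != 0.
Proof. by rewrite lt0r_neq0 //; move: alpha_gt0 beta_ge0; lra. Qed.

Let gap_neq0 : alpha + beta - n%:R * beta != 0.
Proof. exact: lt0r_neq0. Qed.

Let M_unit : A_mx n alpha beta + (2 * alpha)%:M \in unitmx.
Proof.
by rewrite A_mx_addE IJ_unitmx // lt0r_neq0 //; move: alpha_gt0 beta_ge0 gap_gt0; lra.
Qed.

Lemma eq_vecP (z : 'I_n -> R) :
  (forall i, eq_vec D0 alpha beta pa i ord0 = z i) <->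
  (forall i, IJ (alpha + beta + 2 * alpha) beta z i = D0 + IJd pa i).
Proof.
set M := A_mx n alpha beta + (2 * alpha)%:M.
have rhsE : D0 *: E_vec R n + A_mx n alpha beta *m \col_i pa i = \col_i (D0 + IJd pa i).
  by rewrite /A_mx mulmx_IJ_col; apply/matrixP => i j; rewrite !mxE mulr1.
have Mz : M *m \col_i z i = \col_i IJ (alpha + beta + 2 * alpha) beta z i.
  by rewrite /M A_mx_addE mulmx_IJ_col.
have colz : (forall i, eq_vec D0 alpha beta pa i ord0 = z i) <->
    eq_vec D0 alpha beta pa = \col_i z i.
  split=> [ez | -> i]; last by rewrite mxE.
  by apply/matrixP => i j; rewrite (ord1 j) ez mxE.
rewrite colz /eq_vec -/M rhsE; split=> [ez i | IJz].
  by have /matrixP/(_ i ord0) := mulKVmx M_unit (\col_i (D0 + IJd pa i));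
     rewrite ez Mz !mxE.
rewrite -(mulKmx M_unit (\col_i z i)) Mz; congr (_ *m _).
by apply/matrixP => i j; rewrite !mxE IJz.
Qed.

Definition cp_margin (i : 'I_n) : R := eq_vec D0 alpha beta pa i ord0.

Definition isp_margin : 'I_n -> R := IJinv (alpha + beta) beta (fun i => alpha * cp_margin i).

Lemma margins_demand pd ps pc :
  (forall i, ps i + pd i = isp_margin i) -> (forall i, pc i + pa i - pd i = cp_margin i) ->
  forall i, demand D0 alpha beta ps pc i = alpha * cp_margin i.
Proof.
move=> r_eq m_eq i.
rewrite (demand_margins D0 alpha beta pa pd) (IJ_eq _ _ r_eq) (IJ_eq _ _ m_eq).
rewrite /isp_margin IJinvK //.
have := (eq_vecP cp_margin).1 (fun=> erefl) i.
by rewrite /IJ; lra.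
Qed.

Lemma equilibrium_margins pd ps pc :
  is_equilibrium D0 alpha beta pa pd ps pc <->
  [/\ forall i, 0 < cp_margin i, forall i, ps i + pd i = isp_margin i
    & forall i, pc i + pa i - pd i = cp_margin i].
Proof.
rewrite (equilibriumP D0 pa pd ps pc (ltW alpha_gt0) beta_ge0 (ltW gap_gt0)).
split=> [[feas G0 H0] | [y_gt0 r_eq m_eq]].
  set m := fun j => pc j + pa j - pd j.
  have dm i : demand D0 alpha beta ps pc i = alpha * m i.
    by have := H0 i; rewrite /cp_grad /m; lra.
  have IJr i : IJd (fun j => ps j + pd j) i = alpha * m i.
    by have := G0 i; rewrite /isp_grad dm; lra.
  have ym : forall i, cp_margin i = m i.
    apply/(eq_vecP m) => i.
    by have := demand_margins D0 alpha beta pa pd ps pc i; rewrite dm IJr -/m /IJ; lra.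
  split=> [i | i | i]; last by rewrite ym.
    by rewrite ym -(pmulr_rgt0 _ alpha_gt0) -dm.
  rewrite /isp_margin -(IJ_inj ab_neq0 gap_neq0 (q := fun j => ps j + pd j)) // => k.
  by rewrite IJr ym.
have dy := margins_demand r_eq m_eq.
split=> [i | k | i].
- by rewrite dy mulr_gt0.
- by rewrite /isp_grad dy (IJ_eq _ _ r_eq) /isp_margin IJinvK // subrr.
- by rewrite /cp_grad dy m_eq subrr.
Qed.

End Characterization.

Theorem theorem3 (R : realType) (n : nat) (D0 alpha beta : R) (pa : 'I_n -> R) :
  (2 <= n)%N -> 0 < D0 ->
  0 < (n.-1)%:R * beta -> (n.-1)%:R * beta < alpha ->
  (forall i, 0 <= pa i) ->
  (* existence, for any payment vector pd, iff the condition holds *)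
  (forall pd : 'I_n -> R,
     (exists ps pc : 'I_n -> R, is_equilibrium D0 alpha beta pa pd ps pc)
     <-> eq_condition D0 alpha beta pa) /\
  (eq_condition D0 alpha beta pa ->
     (* for every pd exactly one equilibrium *)
     (forall pd : 'I_n -> R,
        (exists ps pc : 'I_n -> R, is_equilibrium D0 alpha beta pa pd ps pc) /\
        (forall ps pc ps' pc' : 'I_n -> R,
           is_equilibrium D0 alpha beta pa pd ps pc ->
           is_equilibrium D0 alpha beta pa pd ps' pc' ->
           ps =1 ps' /\ pc =1 pc')) /\
     (* constants g, h, demand d, revenues, independent of pd *)
     exists (g h d : 'I_n -> R) (uISP : R) (uCP : 'I_n -> R),
       forall pd ps pc : 'I_n -> R,
         is_equilibrium D0 alpha beta pa pd ps pc ->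
         (forall i : 'I_n,
            [/\ ps i = g i - pd i, pc i = h i + pd i &
                ps i + pc i = g i + h i] /\
            [/\ demand D0 alpha beta ps pc i = d i,
                ps i + pd i = g i &
                pc i + pa i - pd i = h i + pa i]) /\
         U_ISP D0 alpha beta pd ps pc = uISP /\
         (forall i : 'I_n, U_CP D0 alpha beta pa pd ps pc i = uCP i)).
Proof.
move=> n_ge2 _ nb_gt0 nb_lt_alpha _.
have n1_gt0 : 0 < (n.-1)%:R :> R by rewrite ltr0n -ltnS prednK ?(leq_trans _ n_ge2).
have beta_gt0 : 0 < beta by move: nb_gt0; rewrite pmulr_rgt0.
have nE : n%:R = (n.-1)%:R + 1 :> R by rewrite natr1 prednK // (leq_trans _ n_ge2).
have alpha_gt0 : 0 < alpha by lra.
have gap_gt0 : 0 < alpha + beta - n%:R * beta by rewrite nE; lra.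
have charE pd ps pc := equilibrium_margins D0 pa alpha_gt0 (ltW beta_gt0) gap_gt0 pd ps pc.
set y := cp_margin D0 alpha beta pa in charE *; set g := isp_margin D0 alpha beta pa in charE *.
have exists_eq pd : eq_condition D0 alpha beta pa ->
    exists ps pc, is_equilibrium D0 alpha beta pa pd ps pc.
  move=> y_gt0; exists (fun i => g i - pd i), (fun i => y i - pa i + pd i).
  by apply/charE; split=> [|i|i]; [exact: y_gt0 | ring | ring].
split=> [pd | y_gt0].
  by split=> [[ps [pc /charE[]]] | /exists_eq].
split=> [pd | ].
  split=> [|ps pc ps' pc' /charE[_ r m] /charE[_ r' m']]; first exact: exists_eq.
  by split=> i; move: (r i) (r' i) (m i) (m' i); lra.
exists g, (fun i => y i - pa i), (fun i => alpha * y i), (\sum_i alpha * y i * g i),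
  (fun i => alpha * y i * y i) => pd ps pc /charE[_ r m].
have dy : forall i, demand D0 alpha beta ps pc i = alpha * y i :=
  margins_demand alpha_gt0 (ltW beta_gt0) gap_gt0 r m.
split; [move=> i | split; [rewrite /U_ISP | move=> i; rewrite /U_CP]].
- by have := r i; have := m i; rewrite dy => mi ri; split; split; lra.
- by apply: eq_bigr => i _; rewrite dy r.
- by rewrite dy m.
Qed.
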